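(* Let $F$ be a MaxSAT instance over $n$ variables with blocking variables $b_1,\dots,b_k$. If there is a $t$-step cost-SR calculus derivation of a set of clauses $\Gamma$ from $F$, then there is a veriPB proof, from $F$ with objective $f=\sum_{i=1}^k b_i$, of some set $\Gamma'\supseteq\Gamma$ in $\mathrm{poly}(nt)$ steps.
   Context: Substitutions map variables to $0$, $1$ or literals ($\sigma(\lnot x)=\lnot\sigma(x)$); $(\sigma\circ\tau)(x)=\sigma(\tau(x))$; total assignments assign Boolean values to all variables. $C{\upharpoonright}_\sigma$: apply $\sigma$ to the literals and simplify; $\Gamma{\upharpoonright}_\sigma$ is the multiset of $C{\upharpoonright}_\sigma\ne1$, $C\in\Gamma$. $\lnot C$ is the partial assignment falsifying all literals of $C$. $\Gamma\vdash_1 C$ means unit propagation on $\Gamma{\upharpoonright}_{\lnot C}$ derives the empty clause. $\mathrm{cost}(\alpha)=\sum_i\alpha(b_i)$. $C$ is cost-SR w.r.t. $\Gamma$ if there is a substitution $\sigma$ with (1) $\Gamma{\upharpoonright}_{\lnot C}\vdash_1(\Gamma\cup\{C\}){\upharpoonright}_\sigma$ and (2) $\mathrm{cost}(\tau\circ\sigma)\le\mathrm{cost}(\tau)$ for all total $\tau\supseteq\lnot C$. A $t$-step cost-SR calculus derivation from $F$ is a sequence $D_1,\dots,D_t$, each in $F$, or obtained from earlier clauses by weakening or resolution, or cost-SR w.r.t. $F\cup\{D_1,\dots,D_{i-1}\}$ with $\mathrm{Var}(D_i)\subseteq\mathrm{Var}(F)$; it derives the set of clauses of $F\cup\{D_1,\dots,D_t\}$.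 veriPB (the fragment used): clauses are encoded as linear inequalities, e.g. $x\lor y\lor\lnot z$ as $x+y+\bar z\ge1$, with formal negated variables $\bar x$; the Boolean axioms $0\le x\le1$ and $x+\bar x=1$ are available. The formal negation $\overline{C}$ of a clause encoded as $\sum\ell\ge1$ is $\sum\ell\le0$. A veriPB proof from $F$ with linear objective $f$ (to be minimized) starts from the encoding of $F$ and the Boolean axioms; at each step an inequality $C$ is added to the current set $\Gamma$ if either (i) $C$ follows from $\Gamma$ by a cutting planes rule, or (ii) there is a substitution $\sigma$ with $\Gamma\cup\{\overline C\}\vdash(\Gamma\cup\{C\}){\upharpoonright}_\sigma\cup\{f{\upharpoonright}_\sigma\le f\}$, where $\vdash$ denotes a cutting planes derivation that is included in the proof (unless it consists only of unit propagation steps or uses of Boolean axioms). *)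

From HB Require Import structures.
From mathcomp Require Import all_boot all_order all_algebra.
Set Implicit Arguments. Unset Strict Implicit. Unset Printing Implicit Defensive.
Import Order.TTheory GRing.Theory Num.Theory.
Local Open Scope ring_scope.

(* A literal is (x, true) = x or (x, false) = not x; variables are nats. *)
Definition lit := (nat * bool)%type.
Definition negl (l : lit) : lit := (l.1, ~~ l.2).
Definition clause := seq lit.
Definition cnf := seq clause.            (* multiset of clauses *)
Definition vars_clause (C : clause) : seq nat := map fst C.
Definition vars_cnf (F : cnf) : seq nat := flatten (map vars_clause F).

Inductive sval := SConst of bool | SLit of lit.
Definition subst := nat -> sval.

Definition subst_lit (s : subst) (l : lit) : sval :=
  match s l.1 with
  | SConst b => SConst (if l.2 then b else ~~ b)
  | SLit l' => SLit (if l.2 then l' else negl l')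
  end.

Definition sval_is_true (v : sval) : bool :=
  if v is SConst b then b else false.

(* C|_sigma : None stands for the constant 1 (satisfied clause); otherwise
   the literals left after removing those mapped to 0. *)
Definition restr_clause (s : subst) (C : clause) : option clause :=
  if has (fun l => sval_is_true (subst_lit s l)) C then None
  else Some (undup (pmap (fun l => if subst_lit s l is SLit l' then Some l'
                                   else None) C)).

Definition restr_cnf (s : subst) (G : cnf) : cnf := pmap (restr_clause s) G.

(* The partial assignment  not C  falsifying all literals of C, seen as a
   substitution (variables it does not assign are mapped to themselves). *)
Definition neg_assign (C : clause) : subst := fun x =>
  if (x, true) \in C then SConst false
  else if (x, false) \in C then SConst true
  else SLit (x, true).

Definition assign_lit (l : lit) : subst := fun x =>
  if x == l.1 then SConst l.2 else SLit (x, true).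

Inductive unit_prop : cnf -> Prop :=
| up_empty G : [::] \in G -> unit_prop G
| up_unit G l : [:: l] \in G -> unit_prop (restr_cnf (assign_lit l) G) ->
                unit_prop G.

Definition up_implies (G : cnf) (D : clause) : Prop :=
  unit_prop (restr_cnf (neg_assign D) G).

Definition assignment := nat -> bool.
Definition eval_lit (t : assignment) (l : lit) : bool :=
  if l.2 then t l.1 else ~~ t l.1.
Definition eval_sval (t : assignment) (v : sval) : bool :=
  match v with SConst b => b | SLit l => eval_lit t l end.
Definition comp_assign (t : assignment) (s : subst) : assignment :=
  fun x => eval_sval t (s x).
Definition cost (b : seq nat) (a : assignment) : nat := (\sum_(i <- b) a i)%N.
Definition extends_neg (t : assignment) (C : clause) : Prop :=
  forall l, l \in C -> eval_lit t l = false.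

Definition cost_SR (b : seq nat) (G : cnf) (C : clause) : Prop :=
  exists s : subst,
    (forall D, D \in restr_cnf s (rcons G C) ->
       up_implies (restr_cnf (neg_assign C) G) D) /\
    (forall t : assignment, extends_neg t C ->
       (cost b (comp_assign t s) <= cost b t)%N).

Definition resolvent_of (E1 E2 D : clause) : Prop :=
  exists x : nat, (x, true) \in E1 /\ (x, false) \in E2 /\
    D =i [seq l <- E1 | l != (x, true)] ++ [seq l <- E2 | l != (x, false)].

(* Justification of D given F and the previous clauses prev = D_1..D_{i-1}. *)
Definition csr_step (b : seq nat) (F : cnf) (prev : seq clause) (D : clause)
    : Prop :=
  D \in F
  \/ (exists E, E \in prev /\ {subset E <= D})
  \/ (exists E1 E2, E1 \in prev /\ E2 \in prev /\ resolvent_of E1 E2 D)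
  \/ (cost_SR b (F ++ prev) D /\ {subset vars_clause D <= vars_cnf F}).

Definition csr_derivation (b : seq nat) (F : cnf) (Ds : seq clause) : Prop :=
  forall i, (i < size Ds)%N -> csr_step b F (take i Ds) (nth [::] Ds i).

(* Pseudo-Boolean constraints  sum c_j l_j >= d  (l_j literals)        *)

Definition pbc := (seq (int * lit) * int)%type.
Definition pb_terms (c : pbc) := c.1.
Definition pb_deg (c : pbc) := c.2.

Definition enc_clause (C : clause) : pbc := ([seq (1%:Z, l) | l <- undup C], 1).
Definition enc_cnf (F : cnf) : seq pbc := map enc_clause F.

(* formal negation: sum c l >= d  becomes  sum c l <= d - 1 *)
Definition pb_neg (c : pbc) : pbc := ([seq (- t.1, t.2) | t <- c.1], 1 - c.2).

Definition pb_coef (c : pbc) (l : lit) : int := \sum_(t <- c.1 | t.2 == l) t.1.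
Definition pb_equiv (c1 c2 : pbc) : Prop :=
  c1.2 = c2.2 /\ forall l, pb_coef c1 l = pb_coef c2 l.

(* Boolean axioms: 0 <= l <= 1 for every literal l, and x + ~x = 1 *)
Definition bool_axiom (c : pbc) : Prop :=
  (exists l : lit, c = ([:: (1, l)], 0) \/ c = ([:: (-1, l)], -1))
  \/ (exists x : nat, c = ([:: (1, (x, true)); (1, (x, false))], 1)
                   \/ c = ([:: (-1, (x, true)); (-1, (x, false))], -1)).

Definition pb_add (c1 c2 : pbc) : pbc := (c1.1 ++ c2.1, c1.2 + c2.2).
Definition pb_mul (k : nat) (c : pbc) : pbc :=
  ([seq (t.1 * k%:Z, t.2) | t <- c.1], c.2 * k%:Z).
Definition ceil_div (a : int) (k : nat) : int := - ((- a) %/ k%:Z)%Z.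
Definition pb_div (k : nat) (c : pbc) : pbc :=
  ([seq (ceil_div t.1 k, t.2) | t <- c.1], ceil_div c.2 k).

(* c follows from the pool P (plus Boolean axioms) by one cutting planes rule
   (the first alternative also allows rewriting into an equivalent form) *)
Definition cp_rule (P : seq pbc) (c : pbc) : Prop :=
  let avail a := a \in P \/ bool_axiom a in
  (exists a, avail a /\ pb_equiv c a)
  \/ (exists a1 a2, avail a1 /\ avail a2 /\ c = pb_add a1 a2)
  \/ (exists (k : nat) a, (0 < k)%N /\ avail a /\ c = pb_mul k a)
  \/ (exists (k : nat) a, (0 < k)%N /\ avail a /\ c = pb_div k a).

Definition cp_derivation (G : seq pbc) (L : seq pbc) : Prop :=
  forall i, (i < size L)%N -> cp_rule (G ++ take i L) (nth ([::], 0) L i).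
Definition cp_derives (L : seq pbc) (D : pbc) : Prop :=
  exists a, a \in L /\ pb_equiv a D.

(* Pseudo-Boolean unit propagation under a partial assignment rho (the list of
   literals set to true). *)
Definition pval (rho : seq lit) (l : lit) : option bool :=
  if l \in rho then Some true else if negl l \in rho then Some false else None.
Definition maxval (rho : seq lit) (c : pbc) : int :=
  \sum_(t <- c.1) match pval rho t.2 with
                  | Some true => t.1
                  | Some false => 0
                  | None => Num.max t.1 0
                  end.
Inductive pb_up (G : seq pbc) : seq lit -> Prop :=
| pbup_conflict rho c : c \in G -> maxval rho c < c.2 -> pb_up G rho
| pbup_prop rho c l : c \in G -> pval rho l = None ->
    maxval (negl l :: rho) c < c.2 -> pb_up G (l :: rho) -> pb_up G rho.
Definition pb_rup (G : seq pbc) (D : pbc) : Prop := pb_up (pb_neg D :: G) [::].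

(* Steps not counted in the proof: D is a premise, a Boolean axiom, or follows
   by unit propagation. *)
Definition free_ok (G : seq pbc) (D : pbc) : Prop :=
  (exists a, a \in G /\ pb_equiv a D) \/ bool_axiom D \/ pb_rup G D.

(* restriction of a PB constraint by a substitution (constants moved to the
   right-hand side) *)
Definition restr_pb (s : subst) (c : pbc) : pbc :=
  (flatten [seq (if subst_lit s t.2 is SLit l' then [:: (t.1, l')] else [::])
           | t <- c.1],
   c.2 - \sum_(t <- c.1) (if subst_lit s t.2 is SConst bb
                          then t.1 * (nat_of_bool bb)%:Z else 0)).

(* objective f = sum_i b_i and the constraint  f|_sigma <= f,
   written  f - (f|_sigma without constants) >= constant part of f|_sigma *)
Definition objective (b : seq nat) : pbc := ([seq (1%:Z, (x, true)) | x <- b], 0).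
Definition obj_con (b : seq nat) (s : subst) : pbc :=
  let r := restr_pb s (objective b) in
  ((objective b).1 ++ [seq (- t.1, t.2) | t <- r.1], - r.2).

(* redundance step adding C to Gamma, with total counted size k
   (1 + the lengths of the included cutting planes subderivations) *)
Definition red_step (b : seq nat) (Gamma : seq pbc) (C : pbc) (k : nat) : Prop :=
  exists s : subst,
    let G := pb_neg C :: Gamma in
    let req := rcons [seq restr_pb s d | d <- rcons Gamma C] (obj_con b s) in
    exists lens : seq nat,
      size lens = size req /\ k = (1 + sumn lens)%N /\
      forall i, (i < size req)%N ->
        free_ok G (nth ([::], 0) req i)
        \/ exists L, cp_derivation G L /\ cp_derives L (nth ([::], 0) req i)
                     /\ size L = nth 0%N lens i.

Definition pb_step (b : seq nat) (Gamma : seq pbc) (C : pbc) (k : nat) : Prop :=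
  (cp_rule Gamma C /\ k = 1%N) \/ red_step b Gamma C k.

(* a veriPB proof from F with objective sum_i b_i: the list of added
   constraints with the counted size of each step *)
Definition veripb_proof (b : seq nat) (F : cnf) (steps : seq (pbc * nat)) : Prop :=
  forall i, (i < size steps)%N ->
    pb_step b (enc_cnf F ++ map fst (take i steps))
            (nth (([::], 0), 0%N) steps i).1 (nth (([::], 0), 0%N) steps i).2.
Definition proof_length (steps : seq (pbc * nat)) : nat := sumn (map snd steps).
Definition proof_result (F : cnf) (steps : seq (pbc * nat)) : seq pbc :=
  enc_cnf F ++ map fst steps.

(* Each step of the cost-SR derivation becomes one veriPB step adding the
   encoding of its clause, and clauses already present are skipped.  Input
   clauses are premises.  Weakening, resolution and tautologies are redundance
   steps with the identity substitution: the restricted constraints follow by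
   reverse unit propagation and the objective condition is [0 >= 0].  A cost-SR
   step with witness [sigma] is a redundance step with [sigma]: after
   propagating the negated clause, pseudo-Boolean propagation simulates the
   clausal unit propagation of the cost-SR condition, and the objective
   condition [f|sigma <= f], true under every assignment extending [~C], is
   derived by cutting planes in linear size by adding a large multiple of [~C]
   to the bounds [p x + q ~x >= min p q] of the variables involved.  Every step
   costs [O(n)], so the proof has size [O(n t)]. *)

From mathcomp Require Import all_boot all_order all_algebra.
From mathcomp Require Import zify lra.
Set Implicit Arguments. Unset Strict Implicit. Unset Printing Implicit Defensive.
Import Order.TTheory GRing.Theory Num.Theory.
Local Open Scope ring_scope.

Lemma neglK : involutive negl.
Proof. by case=> x []. Qed.

Lemma negl_neq l : negl l != l.
Proof. by case: l => x [] /=; rewrite /negl /= xpair_eqE eqxx. Qed.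

(** * Cutting planes derivations *)

Lemma pb_coef_add c1 c2 l : pb_coef (pb_add c1 c2) l = pb_coef c1 l + pb_coef c2 l.
Proof. by rewrite /pb_coef big_cat. Qed.

Lemma pb_coef_mul k c l : pb_coef (pb_mul k c) l = pb_coef c l * k%:Z.
Proof. by rewrite /pb_coef big_map /= mulr_suml. Qed.

Lemma pb_coef_nil d l : pb_coef ([::], d) l = 0.
Proof. by rewrite /pb_coef big_nil. Qed.

Lemma pb_coef_single a l0 d l :
  pb_coef ([:: (a, l0)], d) l = if l0 == l then a else 0.
Proof. by rewrite /pb_coef big_cons big_nil /=; case: (l0 == l); rewrite ?addr0. Qed.

Lemma sum_seq_pred1 (V : seq nat) x (F : nat -> int) : uniq V ->
  \sum_(v <- V) (if v == x then F v else 0) = if x \in V then F x else 0.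
Proof.
elim: V => [|v V IH] /=; first by rewrite big_nil.
case/andP => vV uV; rewrite big_cons IH // inE.
by case: (eqVneq v x) => [<-|] /=; rewrite ?(negbTE vV) ?addr0 ?add0r.
Qed.

Definition pb_trivial : pbc := ([::], 0).
Definition pb_minus1 : pbc := ([::], -1).

Lemma cp_rule_add P a1 a2 : a1 \in P -> a2 \in P -> cp_rule P (pb_add a1 a2).
Proof. by move=> h1 h2; right; left; exists a1, a2; split; [left|split; [left|]]. Qed.

Lemma cp_rule_mul P k a :
  a \in P \/ bool_axiom a -> pb_trivial \in P -> cp_rule P (pb_mul k a).
Proof.
case: k => [|k] Ha P0; last by right; right; left; exists k.+1, a.
left; exists pb_trivial; split; first by left.
by split=> [|l]; rewrite ?pb_coef_mul ?pb_coef_nil /= ?mulr0.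
Qed.

Lemma cp_derivation_cons P c L :
  cp_rule P c -> cp_derivation (rcons P c) L -> cp_derivation P (c :: L).
Proof.
move=> Hc HL [|i] /= Hi; first by rewrite cats0.
by rewrite -cat_rcons; apply: HL.
Qed.

Lemma cp_derivation_cat P L1 L2 :
  cp_derivation P L1 -> cp_derivation (P ++ L1) L2 -> cp_derivation P (L1 ++ L2).
Proof.
move=> H1 H2 i; rewrite size_cat => hi.
case: (ltnP i (size L1)) => h; first by rewrite nth_cat h take_cat h; apply: H1.
rewrite nth_cat ltnNge h /= take_cat ltnNge h /= catA.
by apply: H2; rewrite -(ltn_add2l (size L1)) subnKC.
Qed.

(* [0 >= 0] is not an axiom: add the axioms [x >= 0] and [-x >= -1], read the
   sum as [0 >= -1], and divide by 2, which rounds the degree up to 0. *)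
Definition pb_cancel : pbc :=
  pb_add ([:: (1, (0%N, true))], 0) ([:: (-1, (0%N, true))], -1).
Definition trivial_steps : seq pbc := [:: pb_cancel; pb_minus1; pb_trivial].

Lemma cp_derivation_trivial P : cp_derivation P trivial_steps.
Proof.
apply: cp_derivation_cons.
  right; left; exists ([:: (1, (0%N, true))], 0), ([:: (-1, (0%N, true))], -1).
  split; first by right; left; exists (0%N, true); left.
  by split; first by right; left; exists (0%N, true); right.
apply: cp_derivation_cons.
  left; exists pb_cancel; split; first by left; rewrite mem_rcons mem_head.
  split=> // l; rewrite pb_coef_nil pb_coef_add !pb_coef_single.
  by case: ifP; rewrite ?addrN.
apply: cp_derivation_cons => //.
right; right; right; exists 2%N, pb_minus1; split=> //; split=> //.
by left; rewrite mem_rcons mem_head.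
Qed.

(** * Pseudo-Boolean unit propagation *)

Definition consistent (rho : seq lit) := forall l, l \in rho -> negl l \notin rho.

Lemma consistent_nil : consistent [::].
Proof. by []. Qed.

Lemma pval_noneP rho l : pval rho l = None <-> l \notin rho /\ negl l \notin rho.
Proof. by rewrite /pval; case: (l \in rho); case: (negl l \in rho); split=> // -[]. Qed.

Lemma pval_none_negl rho l : pval rho l = None -> pval rho (negl l) = None.
Proof. by case/pval_noneP => h1 h2; apply/pval_noneP; rewrite neglK. Qed.

Lemma pval_true rho l : pval rho l = Some true -> l \in rho.
Proof. by rewrite /pval; case: (l \in rho) => //; case: (negl l \in rho). Qed.

Lemma pval_false_mem rho l : pval rho l = Some false -> negl l \in rho.
Proof. by rewrite /pval; case: (l \in rho) => //; case: (negl l \in rho). Qed.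

Lemma pval_false rho l : consistent rho -> negl l \in rho -> pval rho l = Some false.
Proof. by move=> c nl; rewrite /pval nl; move: (c _ nl); rewrite neglK => /negPf ->. Qed.

Lemma consistent_cons rho l : consistent rho -> pval rho l = None -> consistent (l :: rho).
Proof.
move=> c /pval_noneP [lr nlr] x; rewrite !inE => /orP [/eqP ->|xr].
  by rewrite negb_or negl_neq.
by rewrite negb_or (c _ xr) andbT; apply: contraNneq nlr => <-; rewrite neglK.
Qed.

Definition pb_all_false (ls : seq lit) : pbc := ([seq (-1, l) | l <- ls], 0).

Lemma pb_neg_enc C : pb_neg (enc_clause C) = pb_all_false (undup C).
Proof. by rewrite /pb_neg /enc_clause /= -map_comp subrr. Qed.

Lemma maxval_all_false rho ls d :
  maxval rho ([seq (-1, l) | l <- ls], d) = - (count (mem rho) ls)%:Z.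
Proof.
rewrite /maxval big_map /=; elim: ls => [|l ls IH]; first by rewrite big_nil.
rewrite big_cons IH /= /pval; case: (l \in rho) => /=; first by lia.
by case: (negl l \in rho) => //=; rewrite add0r.
Qed.

Lemma maxval_all_false_lt0 rho ls d :
  has (mem rho) ls -> maxval rho ([seq (-1, l) | l <- ls], d) < 0.
Proof. by rewrite has_count maxval_all_false oppr_lt0 ltz_nat. Qed.

Lemma maxval_enc_false rho E :
  (forall l, l \in E -> pval rho l = Some false) -> maxval rho (enc_clause E) = 0.
Proof.
by move=> H; rewrite /maxval big_map big1_seq // => l; rewrite mem_undup => /andP [_ /H ->].
Qed.

Lemma pb_up_falsify P ls' ls rho :
  pb_all_false ls' \in P -> {subset ls <= ls'} -> consistent rho ->
  (forall rho', consistent rho' -> {subset rho <= rho'} ->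
     {subset rho' <= rho ++ map negl ls} ->
     (forall l, l \in ls -> negl l \in rho') -> pb_up P rho') ->
  pb_up P rho.
Proof.
move=> inP; elim: ls rho => [|l ls IH] rho sub crho cont.
  by apply: cont => // x; rewrite cats0.
have sub' : {subset ls <= ls'} by move=> x xin; apply: sub; rewrite inE xin orbT.
have lin : l \in ls' by apply: sub; apply: mem_head.
case E: (pval rho l) => [[]|].
- apply: (pbup_conflict inP); apply: maxval_all_false_lt0; apply/hasP; exists l => //.
  exact: pval_true.
- apply: (IH rho sub' crho) => rho' c' s1 s2 all'; apply: cont => //.
  + by move=> x /s2; rewrite !mem_cat /= inE; case/orP => ->; rewrite ?orbT.
  + move=> x; rewrite inE => /orP [/eqP ->|]; last exact: all'.
    by apply: s1; apply: pval_false_mem.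
- have Nnl := pval_none_negl E.
  apply: (pbup_prop inP Nnl).
    by rewrite neglK; apply: maxval_all_false_lt0; apply/hasP; exists l; rewrite ?inE ?eqxx.
  apply: (IH _ sub' (consistent_cons crho Nnl)) => rho' c' s1 s2 all'; apply: cont => //.
  + by move=> x xr; apply: s1; rewrite inE xr orbT.
  + move=> x /s2; rewrite !mem_cat /= !inE.
    by case/orP => [/orP [->|->]|->]; rewrite ?orbT.
  + move=> x; rewrite inE => /orP [/eqP ->|]; last exact: all'.
    by apply: s1; apply: mem_head.
Qed.

Lemma eq_var_lit (l0 l : lit) : l0.1 = l.1 -> l0 = l \/ l0 = negl l.
Proof. by case: l0 l => [x [] [y []]] /= ->; rewrite /negl /=; tauto. Qed.

Lemma subst_assign l l0 : subst_lit (assign_lit l) l0 =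
  if l0.1 == l.1 then SConst (if l0.2 then l.2 else ~~ l.2) else SLit l0.
Proof.
case: l0 => x b; rewrite /subst_lit /assign_lit /=.
by case: (x == l.1) => //; case: b.
Qed.

Lemma restr_clause_assign l E E' : restr_clause (assign_lit l) E = Some E' ->
  l \notin E /\ forall l0, (l0 \in E') = (l0 \in E) && (l0.1 != l.1).
Proof.
rewrite /restr_clause; case: ifP => // hasF [<-]; split.
  apply: contraFN hasF => lE; apply/hasP; exists l => //.
  by rewrite subst_assign eqxx; case: (l.2).
move=> l0; rewrite mem_undup mem_pmap; apply/mapP/andP.
  case=> l1 l1E; rewrite subst_assign; case: ifP => //= h [->].
  by rewrite l1E h.
by case=> l0E h; exists l0 => //; rewrite subst_assign (negbTE h).
Qed.

Lemma subst_neg C l : subst_lit (neg_assign C) l =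
  if (l.1, true) \in C then SConst (~~ l.2)
  else if (l.1, false) \in C then SConst l.2 else SLit l.
Proof.
case: l => x b; rewrite /subst_lit /neg_assign /=.
by case: ((x, true) \in C); case: ((x, false) \in C); case: b.
Qed.

Lemma restr_clause_neg C E E' : restr_clause (neg_assign C) E = Some E' ->
  (forall l, l \in E -> (l \in C) || (l \in E')) /\
  (forall l, l \in E' -> l \in E /\ forall l', l'.1 = l.1 -> l' \notin C).
Proof.
rewrite /restr_clause; case: ifP => // hasF [<-]; split.
  move=> [x b] lE.
  have : ~~ sval_is_true (subst_lit (neg_assign C) (x, b)).
    by apply: contraFN hasF => h; apply/hasP; exists (x, b).
  rewrite subst_neg /=.
  case h1: ((x, true) \in C); first by case: b lE => //= _ _; rewrite h1.
  case h2: ((x, false) \in C); first by case: b lE => //= _ _; rewrite h2.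
  by move=> _; rewrite mem_undup mem_pmap; apply/orP; right; apply/mapP; exists (x, b);
    rewrite ?subst_neg /= ?h1 ?h2.
move=> l; rewrite mem_undup mem_pmap => /mapP [l1 l1E].
rewrite subst_neg; case: ifP => //; case: ifP => // h2 h1 [->].
by split=> // -[y []] /= ->; rewrite ?h1 ?h2.
Qed.

(* The invariant relating clausal unit propagation on [H] to pseudo-Boolean
   propagation under [rho]. *)
Definition reduces_to (Gcl : cnf) (rho : seq lit) (H : cnf) :=
  forall E', E' \in H -> (forall l, l \in E' -> pval rho l = None) /\
    exists2 E, E \in Gcl & forall l, l \in E -> (l \in E') || (negl l \in rho).

Lemma reduces_to_assign Gcl rho H l :
  reduces_to Gcl rho H -> reduces_to Gcl (l :: rho) (restr_cnf (assign_lit l) H).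
Proof.
move=> red E'' /=; rewrite mem_pmap => /mapP [E' E'H] /esym /restr_clause_assign [lE' memE''].
have [NE' [E0 E0G HE0]] := red _ E'H.
split.
  move=> l0; rewrite memE'' => /andP [l0E' vne].
  have /pval_noneP [h1 h2] := NE' _ l0E'.
  apply/pval_noneP; rewrite !inE !negb_or h1 h2 !andbT.
  by split; apply: contraNneq vne => <-.
exists E0 => // l0 /HE0 /orP [l0E'|nl]; last by rewrite inE nl !orbT.
rewrite memE'' l0E' /=; case: (eqVneq l0.1 l.1) => [vq|] //=.
case: (eq_var_lit vq) => e; subst l0; first by rewrite l0E' in lE'.
by rewrite neglK inE eqxx.
Qed.

Lemma unit_prop_pb_up (Gcl H : cnf) (P : seq pbc) rho : {subset map enc_clause Gcl <= P} ->
  unit_prop H -> consistent rho -> reduces_to Gcl rho H -> pb_up P rho.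
Proof.
move=> GP up; elim: up rho => {H} [H e0|H l l1 _ IH] rho crho red.
  have [_ [E /(map_f enc_clause) /GP EP HE]] := red _ e0.
  by apply: (pbup_conflict EP); rewrite maxval_enc_false // => l0 /HE; apply: pval_false.
have [Nl [E /(map_f enc_clause) /GP EP HE]] := red _ l1.
have Nl0 := Nl l (mem_head _ _).
apply: (pbup_prop EP Nl0).
  have c' := consistent_cons crho (pval_none_negl Nl0).
  rewrite maxval_enc_false // => l0 /HE; rewrite mem_seq1 => /orP [/eqP ->|nl].
    exact: pval_false c' (mem_head _ _).
  by apply: pval_false c' _; rewrite inE nl orbT.
apply: IH; first exact: consistent_cons crho Nl0.
exact: reduces_to_assign.
Qed.

Lemma reduces_to_neg_assign Gcl C E rho :
  (forall l, l \in rho -> negl l \in C ++ E) ->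
  (forall l, l \in C ++ E -> negl l \in rho) ->
  reduces_to Gcl rho (restr_cnf (neg_assign E) (restr_cnf (neg_assign C) Gcl)).
Proof.
move=> inv all E' /=; rewrite mem_pmap => /mapP [E1 E1H /esym EE1].
move: E1H; rewrite mem_pmap => /mapP [E0 E0G /esym EE0].
have [A1 B1] := restr_clause_neg EE1; have [A0 B0] := restr_clause_neg EE0.
split.
  move=> l lE'; have [lE1 nE] := B1 _ lE'; have [_ nC] := B0 _ lE1.
  have nCE l' : l'.1 = l.1 -> l' \notin C ++ E by move=> e; rewrite mem_cat negb_or nC ?nE.
  apply/pval_noneP; split; apply: contraTN isT => /inv.
    by move/negP: (nCE (negl l) erefl).
  by rewrite neglK; move/negP: (nCE l erefl).
exists E0 => // l /A0 /orP [lC|/A1 /orP [lE|->]]; rewrite ?orbT //.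
  by rewrite all ?orbT // mem_cat lC.
by rewrite all ?orbT // mem_cat lE orbT.
Qed.

(** * Redundance steps *)

Definition subst_lit_opt (s : subst) (l : lit) : option lit :=
  if subst_lit s l is SLit l' then Some l' else None.

Lemma pb_neg_restr_enc s E :
  pb_neg (restr_pb s (enc_clause E)) =
  ([seq (-1, l) | l <- pmap (subst_lit_opt s) (undup E)],
   (count (fun l => sval_is_true (subst_lit s l)) (undup E))%:Z).
Proof.
rewrite /pb_neg /restr_pb /enc_clause /= big_map; congr (_, _).
  elim: (undup E) => //= l ls IH; rewrite map_cat IH /subst_lit_opt.
  by case: subst_lit.
elim: (undup E) => [|l ls IH] /=; first by rewrite big_nil subrr.
move: IH; rewrite big_cons /=; case: subst_lit => [[]|] /=; lia.
Qed.

Lemma pb_rup_restr_satisfied s E Gamma :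
  restr_clause s E = None -> pb_rup Gamma (restr_pb s (enc_clause E)).
Proof.
rewrite /restr_clause; case: ifP => // /hasP [l lE hl] _.
apply: (pbup_conflict (mem_head _ _)); rewrite pb_neg_restr_enc maxval_all_false /=.
have -> : forall ls : seq lit, count (mem [::]) ls = 0%N by elim.
by rewrite oppr0 ltz_nat -has_count; apply/hasP; exists l; rewrite ?mem_undup.
Qed.

(* Refuting [~C] and [~(E|s)] by propagation leaves exactly the unit
   propagation on [(Gcl|~C)|~(E|s)] that the cost-SR condition provides. *)
Lemma pb_rup_restr_enc s C Gcl Gamma E E' :
  {subset map enc_clause Gcl <= Gamma} ->
  restr_clause s E = Some E' ->
  up_implies (restr_cnf (neg_assign C) Gcl) E' ->
  pb_rup (pb_neg (enc_clause C) :: Gamma) (restr_pb s (enc_clause E)).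
Proof.
move=> GG Er Hu.
have [E'E unsat] : E' = undup (pmap (subst_lit_opt s) E) /\
                   ~~ has (fun l => sval_is_true (subst_lit s l)) E.
  by move: Er; rewrite /restr_clause; case: ifP => // /negbT unsat [<-].
have negE : pb_neg (restr_pb s (enc_clause E)) =
            pb_all_false (pmap (subst_lit_opt s) (undup E)).
  rewrite pb_neg_restr_enc (_ : count _ _ = 0%N) //.
  by apply/eqP; rewrite -leqn0 leqNgt -has_count has_undup.
set P := pb_neg (restr_pb s (enc_clause E)) :: pb_neg (enc_clause C) :: Gamma.
have inC : pb_all_false (undup C) \in P by rewrite -pb_neg_enc !inE eqxx orbT.
have inE' : pb_all_false (pmap (subst_lit_opt s) (undup E)) \in P.
  by rewrite -negE mem_head.
have subE : {subset E' <= pmap (subst_lit_opt s) (undup E)}.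
  move=> x; rewrite E'E mem_undup !mem_pmap => /mapP [y yE ->].
  by apply: map_f; rewrite mem_undup.
apply: (pb_up_falsify inC (fun x (h : x \in undup C) => h) consistent_nil).
move=> rho1 c1 _ s1 a1; apply: (pb_up_falsify inE' subE c1) => rho2 c2 s21 s22 a2.
apply: (unit_prop_pb_up _ Hu c2); first by move=> e /GG h; rewrite !inE h !orbT.
apply: reduces_to_neg_assign => l.
  move/s22; rewrite mem_cat => /orP [/s1|] /mapP [l' l'in ->]; rewrite neglK mem_cat.
    by rewrite -mem_undup l'in.
  by rewrite l'in orbT.
rewrite mem_cat => /orP [lC|lE']; last exact: a2.
by apply: s21; apply: a1; rewrite mem_undup.
Qed.

Definition id_subst : subst := fun x => SLit (x, true).

Lemma restr_pb_id c : restr_pb id_subst c = c.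
Proof.
case: c => ts d; rewrite /restr_pb /=; congr (_, _).
  by elim: ts => //= t ts ->; case: t => a [x []].
by rewrite big1 ?subr0 // => -[a [x []]].
Qed.

Lemma obj_con_id b : pb_equiv pb_trivial (obj_con b id_subst).
Proof.
rewrite /obj_con restr_pb_id; split; first by rewrite /= oppr0.
by move=> l; rewrite pb_coef_nil /pb_coef big_cat /= big_map sumrN subrr.
Qed.

Lemma red_step_intro b Gamma C s L :
  (forall d, d \in rcons Gamma C -> free_ok (pb_neg C :: Gamma) (restr_pb s d)) ->
  cp_derivation (pb_neg C :: Gamma) L -> cp_derives L (obj_con b s) ->
  red_step b Gamma C (1 + size L).
Proof.
move=> Hf HL HD; exists s, (rcons (nseq (size Gamma).+1 0%N) (size L)); split.
  by rewrite !size_rcons size_map size_rcons size_nseq.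
split; first by rewrite -cats1 sumn_cat sumn_nseq mul0n /= addn0.
move=> i; rewrite size_rcons size_map size_rcons ltnS => hi.
rewrite [nth _ (rcons [seq _ | _ <- _] _) _]nth_rcons size_map size_rcons.
case: ltnP => hi2.
  left; rewrite (nth_map ([::], 0)) ?size_rcons //.
  by apply: Hf; apply: mem_nth; rewrite size_rcons.
have -> : i = (size Gamma).+1 by apply/eqP; rewrite eqn_leq hi hi2.
by rewrite eqxx; right; exists L; rewrite nth_rcons size_nseq ltnn eqxx.
Qed.

Lemma red_step_id b Gamma D :
  pb_rup (pb_neg (enc_clause D) :: Gamma) (enc_clause D) ->
  red_step b Gamma (enc_clause D) 4.
Proof.
move=> Hr; apply: (@red_step_intro _ _ _ id_subst trivial_steps).
- move=> d; rewrite restr_pb_id mem_rcons inE => /orP [/eqP ->|dG].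
    by right; right.
  by left; exists d; rewrite inE dG orbT.
- exact: cp_derivation_trivial.
by exists pb_trivial; split; [rewrite !inE eqxx !orbT|exact: obj_con_id].
Qed.

Lemma pb_rup_enc D Gamma :
  (forall rho, consistent rho -> (forall l, l \in D -> negl l \in rho) ->
     pb_up (pb_neg (enc_clause D) :: pb_neg (enc_clause D) :: Gamma) rho) ->
  pb_rup (pb_neg (enc_clause D) :: Gamma) (enc_clause D).
Proof.
move=> cont.
have inD : pb_all_false (undup D) \in pb_neg (enc_clause D) :: pb_neg (enc_clause D) :: Gamma.
  by rewrite -pb_neg_enc mem_head.
apply: (pb_up_falsify inD (fun x (h : x \in undup D) => h) consistent_nil).
by move=> rho c _ _ a; apply: cont => // l lD; apply: a; rewrite mem_undup.
Qed.

Lemma pb_rup_tautology D Gamma l : l \in D -> negl l \in D ->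
  pb_rup (pb_neg (enc_clause D) :: Gamma) (enc_clause D).
Proof.
move=> h1 h2; apply: pb_rup_enc => rho c a.
by move: (c _ (a _ h2)); rewrite neglK a.
Qed.

Lemma pb_rup_weakening D Gamma E : enc_clause E \in Gamma -> {subset E <= D} ->
  pb_rup (pb_neg (enc_clause D) :: Gamma) (enc_clause D).
Proof.
move=> EG sub; apply: pb_rup_enc => rho c a.
apply: (pbup_conflict (c := enc_clause E)); first by rewrite !inE EG !orbT.
by rewrite maxval_enc_false // => l /sub /a /(pval_false c) ->.
Qed.

Lemma pb_rup_resolvent D Gamma E1 E2 :
  enc_clause E1 \in Gamma -> enc_clause E2 \in Gamma -> resolvent_of E1 E2 D ->
  pb_rup (pb_neg (enc_clause D) :: Gamma) (enc_clause D).
Proof.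
move=> h1 h2 [x [x1 [x2 HD]]]; apply: pb_rup_enc => rho c a.
have in1 : enc_clause E1 \in pb_neg (enc_clause D) :: pb_neg (enc_clause D) :: Gamma.
  by rewrite !inE h1 !orbT.
have in2 : enc_clause E2 \in pb_neg (enc_clause D) :: pb_neg (enc_clause D) :: Gamma.
  by rewrite !inE h2 !orbT.
have false1 rho' : consistent rho' -> {subset rho <= rho'} ->
    negl (x, true) \in rho' -> maxval rho' (enc_clause E1) = 0.
  move=> c' s' hx; apply: maxval_enc_false => l lE; apply: pval_false c' _.
  case: (eqVneq l (x, true)) => [->//|ne]; apply: s'; apply: a.
  by rewrite HD mem_cat mem_filter ne lE.
have false2 rho' : consistent rho' -> {subset rho <= rho'} ->
    negl (x, false) \in rho' -> maxval rho' (enc_clause E2) = 0.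
  move=> c' s' hx; apply: maxval_enc_false => l lE; apply: pval_false c' _.
  case: (eqVneq l (x, false)) => [->//|ne]; apply: s'; apply: a.
  by rewrite HD mem_cat !mem_filter ne lE orbT.
case E: (pval rho (x, true)) => [[]|].
- by apply: (pbup_conflict in2); rewrite (false2 rho) //; exact: pval_true E.
- by apply: (pbup_conflict in1); rewrite (false1 rho) //; exact: pval_false_mem E.
have cF := consistent_cons c (pval_none_negl E); have cT := consistent_cons c E.
apply: (pbup_prop in1 E).
  by rewrite (false1 _ cF _ (mem_head _ _)) // => y yr; rewrite inE yr orbT.
apply: (pbup_conflict in2).
by rewrite (false2 _ cT _ (mem_head _ _)) // => y yr; rewrite inE yr orbT.
Qed.

(** * Constraints implied by a negated clause *)

Definition pbval (tau : assignment) (c : pbc) : int :=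
  \sum_(t <- c.1) t.1 * (nat_of_bool (eval_lit tau t.2))%:Z.

Lemma pbval_by_var tau c (V : seq nat) :
  uniq V -> {subset [seq t.2.1 | t <- c.1] <= V} ->
  pbval tau c = \sum_(v <- V) pb_coef c (v, tau v).
Proof.
case: c => ts d uV; rewrite /pbval /pb_coef /=.
elim: ts => [|t ts IH] sub; first by rewrite big_nil big1 // => v _; rewrite big_nil.
have tV : t.2.1 \in V by apply: sub; exact: mem_head.
rewrite big_cons IH => [|u ut]; last by apply: sub; rewrite inE ut orbT.
rewrite [RHS](eq_bigr (fun v => (if v == t.2.1 then t.1 * (nat_of_bool (eval_lit tau t.2))%:Z
                            else 0) + \sum_(t0 <- ts | t0.2 == (v, tau v)) t0.1)).
  by rewrite big_split /= sum_seq_pred1 // tV.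
move=> v _; rewrite big_cons; case: t {sub tV} => a [w bb] /=.
rewrite xpair_eqE /eval_lit /=; case: (eqVneq w v) => [->|ne] /=.
  by case: bb; case: (tau v); rewrite /= ?mulr1 ?mulr0 ?add0r.
by rewrite add0r.
Qed.

Lemma abs_pb_coef_le c l : (`|pb_coef c l|%N <= \sum_(t <- c.1) `|t.1|%N)%N.
Proof.
rewrite /pb_coef; elim: c.1 => [|t ts IH]; first by rewrite !big_nil.
rewrite !big_cons; move: IH; case: (t.2 == l);
  move: (\sum_(t <- ts | t.2 == l) t.1) (\sum_(t <- ts) `|t.1|%N)%N => X Y; lia.
Qed.

Lemma pb_coef_neg_enc C l : pb_coef (pb_neg (enc_clause C)) l = - (nat_of_bool (l \in C))%:Z.
Proof.
rewrite pb_neg_enc /pb_coef big_map /= -(mem_undup C).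
elim: (undup C) (undup_uniq C) => [|x s IH]; first by rewrite big_nil.
case/andP => xs us; rewrite big_cons IH // inE.
by case: (eqVneq x l) => [<-|] /=; rewrite ?(negbTE xs); lia.
Qed.

Section VarBound.
Variables p q : nat -> int.

Definition var_min v := Num.min (p v) (q v).

Definition pb_var_axiom v : pbc :=
  if 0 <= var_min v then ([:: (1, (v, true)); (1, (v, false))], 1)
  else ([:: (-1, (v, true)); (-1, (v, false))], -1).

Definition vb_both v := pb_mul `|var_min v|%N (pb_var_axiom v).
Definition vb_pos v := pb_mul `|p v - var_min v|%N ([:: (1, (v, true))], 0).
Definition vb_neg v := pb_mul `|q v - var_min v|%N ([:: (1, (v, false))], 0).

(* [var_bound v] is [p v * x_v + q v * ~x_v >= min (p v) (q v)]. *)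
Definition var_bound v := pb_add (pb_add (vb_both v) (vb_pos v)) (vb_neg v).

Definition var_bound_steps v : seq pbc :=
  [:: vb_both v; vb_pos v; vb_neg v; pb_add (vb_both v) (vb_pos v); var_bound v].

Lemma var_bound_deg v : (var_bound v).2 = var_min v.
Proof. by rewrite /var_bound /vb_both /pb_var_axiom /=; case: ifP => h /=; lia. Qed.

Lemma var_bound_coef v w bb :
  pb_coef (var_bound v) (w, bb) = if v == w then (if bb then p v else q v) else 0.
Proof.
rewrite /var_bound /vb_both /vb_pos /vb_neg !pb_coef_add !pb_coef_mul !pb_coef_single.
rewrite /pb_var_axiom /var_min; case: ifP => h; rewrite /pb_coef !big_cons big_nil /=;
  rewrite !xpair_eqE; case: (eqVneq v w) => _ /=; case: bb => /=; lia.
Qed.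

Lemma cp_derivation_var_bound P v :
  pb_trivial \in P -> cp_derivation P (var_bound_steps v).
Proof.
move=> P0; have inP a L : a \in P -> a \in P ++ L by move=> h; rewrite mem_cat h.
have bool1 l : bool_axiom ([:: (1, l)], 0) by left; exists l; left.
apply: cp_derivation_cons.
  by apply: cp_rule_mul => //; right; rewrite /pb_var_axiom; case: ifP => _; right; exists v;
    [left|right].
do 2 (apply: cp_derivation_cons;
  first by apply: cp_rule_mul; [right|rewrite -!cats1 -?catA; exact: inP]).
do 2 (apply: cp_derivation_cons;
  first by apply: cp_rule_add; rewrite -!cats1 -!catA mem_cat !inE eqxx ?orbT).
by [].
Qed.

Lemma cp_derivation_sum_var_bounds V P acc : pb_trivial \in P -> acc \in P ->
  exists L, [/\ cp_derivation P L, size L = (6 * size V)%N &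
    exists2 fin, fin \in P ++ L &
      fin.2 = acc.2 + \sum_(v <- V) var_min v /\
      forall l, pb_coef fin l = pb_coef acc l + \sum_(v <- V) pb_coef (var_bound v) l].
Proof.
elim: V P acc => [|v V IH] P acc P0 accP.
  exists [::]; split=> //; exists acc; rewrite ?cats0 // big_nil addr0.
  by split=> // l; rewrite big_nil addr0.
set L1 := rcons (var_bound_steps v) (pb_add acc (var_bound v)).
have inL1 a : a \in P -> a \in P ++ L1 by move=> h; rewrite mem_cat h.
have [|L' [HL' HS' [fin fin_in [fin_deg fin_coef]]]] :=
  IH (P ++ L1) (pb_add acc (var_bound v)) (inL1 _ P0).
  by rewrite mem_cat mem_rcons mem_head orbT.
exists (L1 ++ L'); split.
- apply: cp_derivation_cat => //; rewrite /L1 -cats1.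
  apply: cp_derivation_cat; first exact: cp_derivation_var_bound.
  apply: cp_derivation_cons => //; apply: cp_rule_add; rewrite mem_cat ?accP //.
  by rewrite !inE eqxx !orbT.
- by rewrite size_cat HS' size_rcons mulnS.
exists fin; first by rewrite catA.
rewrite fin_deg big_cons addrA -var_bound_deg; split=> // l.
by rewrite fin_coef pb_coef_add big_cons addrA.
Qed.

End VarBound.

Lemma size_undup_cat (s1 s2 : seq nat) :
  (size (undup (s1 ++ s2)) <= size s1 + size (undup s2))%N.
Proof.
rewrite -size_cat; apply: uniq_leq_size; first exact: undup_uniq.
by move=> x; rewrite mem_undup !mem_cat mem_undup.
Qed.

Section ImpliedConstraint.
Variables (c : pbc) (C : clause).
Hypothesis C_consistent : forall l, l \in C -> negl l \notin C.

(* Literals of [C] are penalised by more than the total weight of [c], so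
   making true the cheaper literal of each variable extends [~C]. *)
Let big_M : nat := (2 * \sum_(t <- c.1) `|t.1|%N).+1.
Let pen v : int := pb_coef c (v, true) + (big_M * nat_of_bool ((v, true) \in C))%N%:Z.
Let pen' v : int := pb_coef c (v, false) + (big_M * nat_of_bool ((v, false) \in C))%N%:Z.
Let cvars : seq nat := undup ([seq t.2.1 | t <- c.1] ++ map fst C).

Lemma var_min_pen v : var_min pen pen' v = pb_coef c (v, pen v <= pen' v).
Proof.
move: (abs_pb_coef_le c (v, true)) (abs_pb_coef_le c (v, false)).
rewrite /var_min; case: (leP (pen v) (pen' v)); rewrite /pen /pen' /big_M.
all: set a := pb_coef c (v, true); set a' := pb_coef c (v, false).
all: set S := (\sum_(t <- c.1) _)%N.
all: case h1: ((v, true) \in C); case h2: ((v, false) \in C) => /=; try lia.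
all: by move: (C_consistent h1); rewrite /negl /= h2.
Qed.

Lemma extends_neg_min : extends_neg (fun v => pen v <= pen' v) C.
Proof.
move=> [v bb] lC; move: (abs_pb_coef_le c (v, true)) (abs_pb_coef_le c (v, false)).
rewrite /eval_lit /pen /pen' /big_M /=.
set a := pb_coef c (v, true); set a' := pb_coef c (v, false).
set S := (\sum_(t <- c.1) _)%N.
case: bb lC => lC /=.
  have h2 : (v, false) \notin C := C_consistent lC.
  by rewrite lC (negbTE h2) /= => ? ?; apply/negbTE/negP; lia.
have h1 : (v, true) \notin C := C_consistent lC.
by rewrite lC (negbTE h1) /= => ? ?; apply: negbF; lia.
Qed.

Lemma deg_le_sum_var_min : (forall tau, extends_neg tau C -> c.2 <= pbval tau c) ->
  c.2 <= \sum_(v <- cvars) var_min pen pen' v.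
Proof.
move=> valid; apply: le_trans (valid _ extends_neg_min) _.
rewrite (@pbval_by_var _ _ cvars (undup_uniq _)); last first.
  by move=> x xc; rewrite mem_undup mem_cat xc.
by rewrite (eq_bigr _ (fun v _ => var_min_pen v)).
Qed.

Lemma pb_coef_sum_var_bounds l :
  pb_coef (pb_mul big_M (pb_neg (enc_clause C))) l +
  \sum_(v <- cvars) pb_coef (var_bound pen pen' v) l = pb_coef c l.
Proof.
case: l => w bb; rewrite pb_coef_mul pb_coef_neg_enc.
under eq_bigr => v _ do rewrite var_bound_coef.
rewrite sum_seq_pred1 ?undup_uniq //; case: ifP => wV.
  by rewrite /pen /pen'; case: bb; case: (_ \in C) => /=; lia.
have nC : (w, bb) \notin C.
  apply: contraFN wV => h; rewrite mem_undup mem_cat; apply/orP; right.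
  by apply/mapP; exists (w, bb).
have -> : pb_coef c (w, bb) = 0.
  rewrite /pb_coef big1_seq // => t /andP [/eqP e tc].
  suff : w \in cvars by rewrite wV.
  by rewrite /cvars mem_undup mem_cat; apply/orP; left; apply/mapP; exists t; rewrite ?e.
by rewrite (negbTE nC) /=; lia.
Qed.

(* Sum [big_M * ~C] with the bounds of all variables: the coefficients become
   those of [c] and the degree is at least [c.2], so subtract the surplus. *)
Lemma cp_derive_implied P : pb_neg (enc_clause C) \in P ->
  (forall tau, extends_neg tau C -> c.2 <= pbval tau c) ->
  exists L, [/\ cp_derivation P L, cp_derives L c &
    (size L <= 6 * (size c.1 + size (undup (map fst C))) + 6)%N].
Proof.
move=> inP valid.
set acc := pb_mul big_M (pb_neg (enc_clause C)).
set P1 := P ++ trivial_steps ++ [:: acc].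
have P0 : pb_trivial \in P1 by rewrite !mem_cat !inE eqxx !orbT.
have accP : acc \in P1 by rewrite !mem_cat mem_head !orbT.
have [L1 [HL1 HS1 [fin fin_in [fin_deg fin_coef]]]] :=
  cp_derivation_sum_var_bounds pen pen' cvars P0 accP.
set D := \sum_(v <- cvars) var_min pen pen' v.
set slack := pb_mul `|D - c.2|%N pb_minus1.
exists (trivial_steps ++ [:: acc] ++ L1 ++ [:: slack; pb_add fin slack]); split.
- apply: cp_derivation_cat; first exact: cp_derivation_trivial.
  apply: cp_derivation_cons.
    by apply: cp_rule_mul; [left; rewrite mem_cat inP|rewrite mem_cat !inE eqxx !orbT].
  rewrite -cats1 -catA; apply: cp_derivation_cat => //.
  apply: cp_derivation_cons.
    by apply: cp_rule_mul; [left|]; rewrite /P1 !mem_cat !inE eqxx !orbT.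
  apply: cp_derivation_cons => //; apply: cp_rule_add.
    by rewrite mem_rcons inE fin_in orbT.
  by rewrite mem_rcons mem_head.
- exists (pb_add fin slack); split; first by rewrite !mem_cat !inE eqxx !orbT.
  split=> [|l]; last first.
    by rewrite pb_coef_add pb_coef_mul pb_coef_nil mul0r addr0 fin_coef pb_coef_sum_var_bounds.
  have := deg_le_sum_var_min valid; rewrite -/D => Dc.
  rewrite /= fin_deg /acc /= -/D subrr mul0r add0r mulN1r gez0_abs ?subr_ge0 //; lra.
rewrite !size_cat /= HS1.
have := size_undup_cat [seq t.2.1 | t <- c.1] (map fst C); rewrite size_map -/cvars.
set k := size (undup _); set m := size c.1.
move: (size cvars) => z; lia.
Qed.

End ImpliedConstraint.

(** * The objective condition *)

Lemma pbval_restr_objective b s tau :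
  pbval tau (restr_pb s (objective b)) - (restr_pb s (objective b)).2 =
  (cost b (comp_assign tau s))%:Z.
Proof.
rewrite /pbval /cost /restr_pb /objective /= big_map.
elim: b => [|x b IH]; first by rewrite !big_nil /=; lia.
rewrite /= big_cat /= !big_cons /comp_assign /=.
have -> : subst_lit s (x, true) = s x by rewrite /subst_lit /=; case: (s x).
move: IH; rewrite /comp_assign /=.
set A := \sum_(i <- flatten _) _; set B := \sum_(j <- b) _; set N := (\sum_(i <- b) _)%N.
by case: (s x) => [bb|l] /=; rewrite ?big_nil ?big_cons ?big_nil /=;
  [case: bb|case: (eval_lit tau l)] => /=; lia.
Qed.

Lemma obj_con_valid b s tau : (cost b (comp_assign tau s) <= cost b tau)%N ->
  (obj_con b s).2 <= pbval tau (obj_con b s).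
Proof.
move=> hc.
have e1 : pbval tau (objective b) = (cost b tau)%:Z.
  rewrite /pbval /objective /cost /= big_map; elim: b {hc} => [|x b IH].
    by rewrite !big_nil.
  by rewrite !big_cons IH /eval_lit /=; lia.
have := pbval_restr_objective b s tau; set r := restr_pb s (objective b) => K.
have -> : pbval tau (obj_con b s) = pbval tau (objective b) - pbval tau r.
  rewrite /pbval big_cat /=; congr (_ + _).
  by rewrite big_map -sumrN; apply: eq_bigr => t _; rewrite mulNr.
rewrite e1; change (obj_con b s).2 with (- r.2); move: K; lia.
Qed.

Lemma size_restr_pb s c : (size (restr_pb s c).1 <= size c.1)%N.
Proof.
case: c => ts d; rewrite /restr_pb /=; elim: ts => //= t ts IH.
by rewrite size_cat; case: subst_lit => /= [_|_]; lia.
Qed.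

Lemma size_obj_con b s : (size (obj_con b s).1 <= 2 * size b)%N.
Proof.
have := size_restr_pb s (objective b).
by rewrite /obj_con size_cat size_map /objective /= size_map; lia.
Qed.

(** * Simulating the cost-SR calculus *)

Lemma red_step_cost_SR b G K D : G =i K -> cost_SR b G D ->
  (forall l, l \in D -> negl l \notin D) ->
  exists2 k, red_step b (enc_cnf K) (enc_clause D) k &
    (k <= 6 * (2 * size b + size (undup (map fst D))) + 7)%N.
Proof.
move=> GK [s [Hup Hcost]] consD.
have [L [HL HD HS]] := @cp_derive_implied (obj_con b s) D consD
  (pb_neg (enc_clause D) :: enc_cnf K) (mem_head _ _)
  (fun tau ext => obj_con_valid (Hcost tau ext)).
exists (1 + size L)%N; last by have := size_obj_con b s; lia.
apply: (red_step_intro (s := s)) HL HD => d; rewrite mem_rcons inE => dK.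
have GKenc : {subset map enc_clause G <= enc_cnf K}.
  by move=> e /mapP [E EG ->]; apply: map_f; rewrite -GK.
have [E -> EG] : exists2 E, d = enc_clause E & E \in rcons G D.
  case/orP: dK => [/eqP ->|/mapP [E EK ->]]; first by exists D; rewrite ?mem_rcons ?mem_head.
  by exists E; rewrite // mem_rcons inE GK EK orbT.
right; right; case Er: (restr_clause s E) => [E'|]; last exact: pb_rup_restr_satisfied.
apply: (pb_rup_restr_enc GKenc Er (Hup _ _)).
by rewrite mem_pmap; apply/mapP; exists E => //; rewrite Er.
Qed.

Local Close Scope ring_scope.

Lemma size_le_bound (s : seq nat) n :
  uniq s -> (forall x, x \in s -> x < n) -> size s <= n.
Proof.
move=> us h; rewrite -(size_iota 0 n); apply: uniq_leq_size => // x /h.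
by rewrite mem_iota.
Qed.

Lemma pb_step_csr_step b F prev K D n :
  F ++ prev =i K -> csr_step b F prev D ->
  (forall x, x \in vars_clause D -> x < n) -> uniq b -> (forall x, x \in b -> x < n) ->
  exists2 k, pb_step b (enc_cnf K) (enc_clause D) k & k <= 18 * n + 7.
Proof.
move=> FK st vD ub vb.
have encK E : E \in F ++ prev -> enc_clause E \in enc_cnf K.
  by move=> h; apply: map_f; rewrite -FK.
have prevK E : E \in prev -> enc_clause E \in enc_cnf K.
  by move=> h; apply: encK; rewrite mem_cat h orbT.
case: st => [DF|[[E [Ep sub]]|[[E1 [E2 [h1 [h2 hr]]]]|[hsr _]]]].
- exists 1%N; last by lia.
  left; split=> //; left; exists (enc_clause D).
  by split=> //; left; apply: encK; rewrite mem_cat DF.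
- exists 4%N; last by lia.
  by right; apply: red_step_id; exact: pb_rup_weakening (prevK _ Ep) sub.
- exists 4%N; last by lia.
  by right; apply: red_step_id; exact: pb_rup_resolvent (prevK _ h1) (prevK _ h2) hr.
have [/hasP [l lD nlD]|/hasP taut] := boolP (has (fun l => negl l \in D) D).
  exists 4%N; last by lia.
  by right; apply: red_step_id; exact: pb_rup_tautology lD nlD.
have consD l : l \in D -> negl l \notin D by move=> lD; apply/negP => h; apply: taut; exists l.
have [k Hk Hb] := red_step_cost_SR FK hsr consD.
exists k; first by right.
have h1 := size_le_bound ub vb.
have h2 : size (undup (map fst D)) <= n.
  by apply: size_le_bound; [exact: undup_uniq|move=> x; rewrite mem_undup; exact: vD].
lia.
Qed.

Lemma veripb_proof_rcons b F st x : veripb_proof b F st ->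
  pb_step b (enc_cnf F ++ map fst st) x.1 x.2 -> veripb_proof b F (rcons st x).
Proof.
move=> H Hx i; rewrite size_rcons ltnS leq_eqVlt => /orP [/eqP ->|hi].
  by rewrite nth_rcons ltnn eqxx -cats1 take_size_cat.
by rewrite nth_rcons hi -cats1 takel_cat ?(ltnW hi) //; exact: H.
Qed.

Lemma proof_length_rcons st x : proof_length (rcons st x) = (proof_length st + x.2)%N.
Proof. by rewrite /proof_length -cats1 map_cat sumn_cat /= addn0. Qed.

Lemma veripb_simulation n (F : cnf) (b : seq nat) (Ds : seq clause) :
  uniq b -> (forall x, x \in b -> x < n) ->
  (forall D x, D \in Ds -> x \in vars_clause D -> x < n) ->
  csr_derivation b F Ds ->
  forall j, j <= size Ds ->
  exists st NS, [/\ veripb_proof b F st, map fst st = enc_cnf NS, uniq NS,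
    {subset NS <= Ds} & F ++ take j Ds =i F ++ NS] /\
    proof_length st <= size NS * (18 * n + 7).
Proof.
move=> ub vb vD der; elim=> [|j IH] hj.
  by exists [::], [::]; split=> //; split=> // x; rewrite take0.
have [st [NS [[Hv Hm uN sub eqNS] Hl]]] := IH (ltnW hj).
have Dj : nth [::] Ds j \in Ds by exact: mem_nth.
have eq' : F ++ take j.+1 Ds =i rcons (F ++ take j Ds) (nth [::] Ds j).
  by move=> x; rewrite (take_nth [::] hj) -rcons_cat.
case: (boolP (nth [::] Ds j \in F ++ take j Ds)) => [Din|Dnin].
  exists st, NS; split=> //; split=> // x; rewrite eq' mem_rcons inE -eqNS.
  by case: eqP => // ->.
have [k Hk Hkb] := pb_step_csr_step eqNS (der j hj) (fun x => vD _ x Dj) ub vb.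
exists (rcons st (enc_clause (nth [::] Ds j), k)), (rcons NS (nth [::] Ds j)); split.
  split.
  - by apply: veripb_proof_rcons => //=; rewrite Hm -map_cat.
  - by rewrite map_rcons Hm /enc_cnf map_rcons.
  - by rewrite rcons_uniq uN andbT; apply: contra Dnin; rewrite eqNS mem_cat orbC => ->.
  - by move=> x; rewrite mem_rcons inE => /orP [/eqP ->|/sub].
  by move=> x; rewrite eq' mem_rcons inE eqNS !mem_cat mem_rcons inE orbCA.
by rewrite proof_length_rcons size_rcons mulSn /=; lia.
Qed.

Lemma simulation_length_bound n (Ds NS : seq clause) : uniq NS -> {subset NS <= Ds} ->
  (forall D x, D \in Ds -> x \in vars_clause D -> x < n) ->
  size NS * (18 * n + 7) <= 25 * (n * size Ds).+1 ^ 25.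
Proof.
move=> uN sub vD; apply: (@leq_trans (25 * (n * size Ds).+1)); last first.
  by rewrite leq_mul2l -{1}(expn1 (n * size Ds).+1) leq_pexp2l.
have sNS : size NS <= size Ds.
  apply: leq_trans (size_undup Ds); apply: uniq_leq_size => // x /sub.
  by rewrite mem_undup.
case: n vD => [|n] vD; last by nia.
(* For [n = 0] all clauses of [Ds] are empty, and only distinctness bounds [NS]. *)
suff : size NS <= 1 by lia.
rewrite (_ : 1 = size [:: [::] : clause]) //; apply: uniq_leq_size => // -[|l D] /sub DDs.
  exact: mem_head.
by have := vD _ l.1 DDs (mem_head _ _).
Qed.

Theorem proposition3p10 :
  exists c : nat,
  forall (n : nat) (F : cnf) (b : seq nat) (Ds : seq clause),
    (forall x, x \in vars_cnf F -> x < n) ->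
    uniq b -> (forall x, x \in b -> x < n) ->
    (forall D x, D \in Ds -> x \in vars_clause D -> x < n) ->
    csr_derivation b F Ds ->
    exists steps : seq (pbc * nat),
      veripb_proof b F steps /\
      proof_length steps <= c * (n * size Ds).+1 ^ c /\
      (forall C, C \in F ++ Ds ->
         exists a, a \in proof_result F steps /\ pb_equiv a (enc_clause C)).
Proof.
exists 25 => n F b Ds _ ub vb vD der.
have [st [NS [[Hv Hm uN sub eqNS] Hl]]] := veripb_simulation ub vb vD der (leqnn _).
exists st; split=> //; split.
  exact: leq_trans Hl (simulation_length_bound uN sub vD).
move=> C hC; exists (enc_clause C); split=> //.
by rewrite /proof_result Hm -map_cat map_f // -eqNS take_size.
Qed.
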